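(* Let $w\in\Sigma^n$. If $\mathtt{BR}(w)$ contains no rich word, then $|\mathrm{Alph}(w)|<n-1$.
   Context: $\Sigma$ is an alphabet and $\Sigma^n$ the set of words of length $n$ over it. For a word $w=w_1\cdots w_n$, $w^R=w_n\cdots w_1$; $w$ is a palindrome if $w=w^R$; a factor of $w$ is a word $u$ with $w=puq$. A word $w$ is rich if the number of distinct nonempty palindromic factors of $w$ equals $|w|$. $\mathrm{Alph}(w)$ is the set of letters occurring in $w$. The block reversal of a nonempty word $w$ is $\mathtt{BR}(w)=\{B_t\cdots B_1 : w=B_1\cdots B_t,\ t\ge1,\ \text{each } B_i \text{ nonempty}\}$. *)

From mathcomp Require Import all_boot.
Set Implicit Arguments. Unset Strict Implicit. Unset Printing Implicit Defensive.

Definition is_palindrome (T : eqType) (u : seq T) : bool := u == rev u.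

Definition factors (T : eqType) (w : seq T) : seq (seq T) :=
  [seq drop i (take j w) | i <- iota 0 (size w).+1, j <- iota 0 (size w).+1].

Definition pal_factors (T : eqType) (w : seq T) : seq (seq T) :=
  undup [seq u <- factors w | (u != [::]) && is_palindrome u].

Definition rich (T : eqType) (w : seq T) : bool :=
  size (pal_factors w) == size w.

Definition alph (T : eqType) (w : seq T) : seq T := undup w.

Definition in_BR (T : eqType) (w v : seq T) : Prop :=
  exists bs : seq (seq T),
    [/\ bs != [::], all (fun b => b != [::]) bs, flatten bs = w
      & v = flatten (rev bs)].

(* If |Alph(w)| >= n - 1, then either all letters of w are distinct, or exactly
   one letter a occurs twice: w = p a q a r with p a q r duplicate-free.  In the
   first case w itself is in BR(w) and is rich, its nonempty palindromic factors
   being its n letters.  In the second case the block reversal of p | a q | a | r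
   is r a a q p, whose nonempty palindromic factors are its n - 1 distinct
   letters together with aa: a longer palindrome would begin and end with the
   same letter, and only a occurs twice, in adjacent positions. *)

From mathcomp Require Import all_boot.
From mathcomp Require Import zify.

Set Implicit Arguments.
Unset Strict Implicit.
Unset Printing Implicit Defensive.

Section Words.

Variable T : eqType.
Implicit Types (a c : T) (u v w p q r s : seq T).

Lemma mem_factors u w : (u \in factors w) = infix u w.
Proof.
apply/allpairsP/idP => [[[i j] [_ _ ->]] | /infixP[s [s' ->]]] /=.
  exact: infix_trans (infix_drop _ _) (infix_take _ _).
have mem_range k : (k \in iota 0 (size (s ++ u ++ s')).+1) = (k <= size (s ++ u ++ s')).
  by rewrite mem_iota.
exists (size s, size s + size u); rewrite !mem_range !size_cat; split => /=; try lia.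
by rewrite catA take_size_cat ?size_cat // drop_size_cat.
Qed.

Lemma mem_pal_factors u w :
  (u \in pal_factors w) = [&& u != [::], is_palindrome u & infix u w].
Proof. by rewrite /pal_factors mem_undup mem_filter mem_factors andbA. Qed.

Lemma singleton_pal_factor c w : ([:: c] \in pal_factors w) = (c \in w).
Proof. by rewrite mem_pal_factors /is_palindrome /= eqxx infix1s. Qed.

Lemma palindrome_cons c u :
  is_palindrome (c :: u) -> u = [::] \/ exists m, u = rcons m c.
Proof.
case/lastP: u => [|m d]; first by left.
by rewrite /is_palindrome rev_cons rev_rcons => /eqP[-> _]; right; exists m.
Qed.

Lemma rich_of_pal_factors v (S : seq (seq T)) :
  pal_factors v =i S -> uniq S -> size S = size v -> rich v.
Proof.
move=> pal_S S_uniq size_S.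
by rewrite /rich -size_S (perm_size (uniq_perm (undup_uniq _) S_uniq pal_S)).
Qed.

Lemma singletons_uniq v : uniq [seq [:: c] | c <- v] = uniq v.
Proof. by rewrite map_inj_uniq // => x y []. Qed.

Lemma pal_factors_uniq v : uniq v -> pal_factors v =i [seq [:: c] | c <- v].
Proof.
move=> v_uniq u; apply/idP/mapP => [|[c c_v ->]]; last by rewrite singleton_pal_factor.
rewrite mem_pal_factors; case: u => [|c u] //= /andP[/palindrome_cons[->|[m ->]] u_v].
  by exists c; rewrite -?infix1s.
by have := infix_uniq u_v v_uniq; rewrite /= mem_rcons mem_head.
Qed.

Lemma rich_uniq v : uniq v -> rich v.
Proof.
move=> v_uniq; apply: (rich_of_pal_factors (pal_factors_uniq v_uniq)).
  by rewrite singletons_uniq.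
by rewrite size_map.
Qed.

Lemma cat_cons_notin_inj a p1 p2 r1 r2 :
  a \notin p1 -> a \notin p2 -> p1 ++ a :: r1 = p2 ++ a :: r2 -> p1 = p2 /\ r1 = r2.
Proof.
move=> a_p1 a_p2 eq12; have := congr1 (index a) eq12.
rewrite !index_cat (negbTE a_p1) (negbTE a_p2) /= eqxx !addn0 => size12.
by move/eqP: eq12; rewrite eqseq_cat // => /andP[/eqP-> /eqP[->]].
Qed.

Lemma infix_cons_rcons_double s1 a s2 c m :
  uniq (s1 ++ a :: s2) -> infix (c :: rcons m c) (s1 ++ a :: a :: s2) ->
  c = a /\ m = [::].
Proof.
move=> s_uniq /infixP[s [s' v_eq]].
have count_v : count_mem c (s1 ++ a :: a :: s2) = count_mem c (s1 ++ a :: s2) + (a == c).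
  by rewrite !count_cat /=; lia.
have count_s : count_mem c (s1 ++ a :: s2) <= 1 by rewrite count_uniq_mem ?leq_b1.
move: count_v count_s; rewrite v_eq !count_cat /= -cats1 count_cat /= eqxx.
case: eqP => [a_c | _] /= count_eq count_le; last lia.
subst c; have a_s : a \notin s by apply/count_memPn; lia.
have a_m : a \notin m by apply/count_memPn; lia.
have a_s1 : a \notin s1 by move: s_uniq; rewrite cat_uniq /= => /and3P[_ /norP[]].
move: v_eq; rewrite -cats1 /= -catA /= => /(cat_cons_notin_inj a_s1 a_s)[_] s2_eq.
by case: (cat_cons_notin_inj (p1 := [::]) isT a_m s2_eq).
Qed.

Lemma pal_factors_double s1 a s2 :
  uniq (s1 ++ a :: s2) ->
  pal_factors (s1 ++ a :: a :: s2) =i [:: a; a] :: [seq [:: c] | c <- s1 ++ a :: s2].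
Proof.
move=> s_uniq u; rewrite in_cons; apply/idP/orP => [|[/eqP-> | /mapP[c c_s ->]]].
- rewrite mem_pal_factors; case: u => [|c u] //= /andP[/palindrome_cons[->|[m ->]]].
    rewrite infix1s => c_v; right; apply/mapP; exists c => //.
    by move: c_v; rewrite !mem_cat !in_cons; case: (c == a); rewrite ?orbT.
  by case/(infix_cons_rcons_double s_uniq) => -> ->; left.
- rewrite mem_pal_factors /is_palindrome /= eqxx.
  exact/infix_catl/prefix_infix.
- rewrite singleton_pal_factor; move: c_s; rewrite !mem_cat !in_cons.
  by case: (c == a); rewrite ?orbT.
Qed.

Lemma rich_double s1 a s2 : uniq (s1 ++ a :: s2) -> rich (s1 ++ a :: a :: s2).
Proof.
move=> s_uniq; apply: (rich_of_pal_factors (pal_factors_double s_uniq)).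
  rewrite /= singletons_uniq s_uniq andbT; apply/mapP => -[c _] //.
by rewrite /= size_map !size_cat /= !addnS.
Qed.

Lemma not_uniq_split w :
  ~~ uniq w -> exists p a q r, w = p ++ a :: q ++ a :: r.
Proof.
elim: w => // x w IH /=; case: (boolP (x \in w)) => [/splitPr[q r] _ | _ /IH].
  by exists [::], x, q, r.
by case=> [p [a [q [r ->]]]]; exists (x :: p), a, q, r.
Qed.

Lemma uniq_or_one_repeat w :
  size w <= (size (undup w)).+1 ->
  uniq w \/ exists p a q r, w = p ++ a :: q ++ a :: r /\ uniq (p ++ a :: q ++ r).
Proof.
move=> size_w; case: (boolP (uniq w)) => [|/not_uniq_split[p [a [q [r w_eq]]]]]; first by left.
right; exists p, a, q, r; split => //.
have undup_w : undup w =i p ++ a :: q ++ r.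
  by move=> x; rewrite mem_undup w_eq !(mem_cat, in_cons); case: (x == a); rewrite ?orbT.
rewrite (uniq_size_uniq (undup_uniq w) undup_w) eqn_leq.
rewrite (uniq_leq_size (undup_uniq w)) ?andbT => [|x]; last by rewrite undup_w.
by move: size_w; rewrite {1}w_eq !size_cat /= !size_cat /=; lia.
Qed.

Lemma in_BR_flatten (bs : seq (seq T)) :
  flatten bs != [::] -> in_BR (flatten bs) (flatten (rev bs)).
Proof.
have flatten_nonempty l : flatten [seq b <- l | b != [::]] = flatten l.
  by elim: l => //= -[|x b] l /= ->.
move=> bs_ne; exists [seq b <- bs | b != [::]].
rewrite -filter_rev !flatten_nonempty filter_all; split=> //.
by apply: contraNneq bs_ne => bs'_nil; rewrite -flatten_nonempty bs'_nil.
Qed.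

End Words.

Theorem mainTheorem3 (T : eqType) (n : nat) (w : seq T) :
  size w = n ->
  w != [::] ->
  (forall v : seq T, in_BR w v -> ~~ rich v) ->
  size (alph w) < n - 1.
Proof.
move=> <- w_ne no_rich; rewrite ltnNge; apply/negP => alph_big.
have size_w : size w <= (size (undup w)).+1 by rewrite -add1n -leq_subLR.
case: (uniq_or_one_repeat size_w) => [w_uniq | [p [a [q [r [w_eq s_uniq]]]]]].
  have w_BR : in_BR w w by have := in_BR_flatten (bs := [:: w]); rewrite /= cats0; apply.
  by have := no_rich _ w_BR; rewrite rich_uniq.
have v_BR : in_BR w (r ++ a :: a :: (q ++ p)).
  have := in_BR_flatten (bs := [:: p; a :: q; [:: a]; r]).
  by rewrite /= !cats0 -w_eq; apply.
have := no_rich _ v_BR; rewrite rich_double //.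
by rewrite uniq_catC -cat_cons -catA uniq_catCA in s_uniq.
Qed.
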